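(* Let $X$ be a rearrangement invariant sequence space such that the discrete Cesàro operator $C$ is bounded on $X$. Then $(CX)_a=C(X_a)$.
   Context: A rearrangement invariant sequence space is a Banach space $X$ of real sequences with the ideal property ($|x|\le|y|$ coordinatewise, $y\in X$ imply $x\in X$, $\|x\|_X\le\|y\|_X$), containing a sequence with all coordinates nonzero, with equal norms for equimeasurable sequences. $C(x)_n=\frac1n\sum_{k=1}^nx_k$. $CX=\{x:C(|x|)\in X\}$ with $\|x\|_{CX}=\|C(|x|)\|_X$, and $C(X_a)=\{x: C(|x|)\in X_a\}$. For a Banach ideal space $Y$, $Y_a$ denotes the ideal of order continuous elements: $y\in Y_a$ iff $0\le y^{(n)}\le|y|$, $y^{(n)}\downarrow0$ coordinatewise imply $\|y^{(n)}\|_Y\to0$. *)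

(* sequences are  nat -> R  with R : realType,
   indices shifted to start at 0 (paper's x_1 is our x 0). *)
From HB Require Import structures.
From mathcomp Require Import all_boot all_order all_algebra.
From mathcomp Require Import all_classical all_reals all_analysis.
Set Implicit Arguments. Unset Strict Implicit. Unset Printing Implicit Defensive.
Import Order.TTheory GRing.Theory Num.Theory.
Import numFieldNormedType.Exports.
Local Open Scope classical_set_scope.
Local Open Scope ring_scope.

Section Defs.
Variable R : realType.
Notation seqR := (nat -> R).

Definition absq (x : seqR) : seqR := fun n => `|x n|.

Definition cesaro (x : seqR) : seqR :=
  fun n => (n.+1%:R)^-1 * \sum_(k < n.+1) x k.

(* equimeasurable: equal distribution functions t |-> #{n : |x n| > t},
   values being cardinals (possibly infinite) *)
Definition equimeasurable (x y : seqR) : Prop :=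
  forall t : R, 0 < t -> card_eq [set n | t < `|x n|] [set n | t < `|y n|].

Definition banach_seq_space (X : set seqR) (nrm : seqR -> R) : Prop :=
  X (fun _ => 0) /\
      (forall x y, X x -> X y -> X (fun n => x n + y n)) /\
      (forall (a : R) x, X x -> X (fun n => a * x n)) /\
      (forall x, X x -> 0 <= nrm x /\ (nrm x = 0 <-> x = (fun _ => 0))) /\
      (forall (a : R) x, X x -> nrm (fun n => a * x n) = `|a| * nrm x) /\
      (forall x y, X x -> X y -> nrm (fun n => x n + y n) <= nrm x + nrm y) /\
      (forall u : nat -> seqR, (forall m, X (u m)) ->
         (forall e : R, 0 < e -> exists N, forall m k, (N <= m)%N -> (N <= k)%N ->
              nrm (fun n => u m n - u k n) < e) ->
         exists2 v, X v & (fun m => nrm (fun n => u m n - v n)) @ \oo --> (0 : R)).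

Definition ideal_property (X : set seqR) (nrm : seqR -> R) : Prop :=
  forall x y, (forall n, `|x n| <= `|y n|) -> X y -> X x /\ nrm x <= nrm y.

Definition banach_ideal_space (X : set seqR) (nrm : seqR -> R) : Prop :=
  banach_seq_space X nrm /\ ideal_property X nrm.

Definition ri_space (X : set seqR) (nrm : seqR -> R) : Prop :=
  [/\ banach_ideal_space X nrm,
      (exists2 x, X x & forall n, x n != 0) &
      (forall x y, X x -> equimeasurable x y -> X y /\ nrm y = nrm x)].

Definition cesaro_bounded (X : set seqR) (nrm : seqR -> R) : Prop :=
  (forall x, X x -> X (cesaro x)) /\
  exists K : R, forall x, X x -> nrm (cesaro x) <= K * nrm x.

Definition CX (X : set seqR) : set seqR := [set x | X (cesaro (absq x))].
Definition CX_norm (nrm : seqR -> R) : seqR -> R := fun x => nrm (cesaro (absq x)).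

Definition order_cont (Y : set seqR) (nrm : seqR -> R) : set seqR :=
  [set y | Y y /\
    forall yy : nat -> seqR,
      (forall m k, 0 <= yy m k /\ yy m k <= `|y k|) ->
      (forall m k, yy m.+1 k <= yy m k) ->
      (forall k, (fun m => yy m k) @ \oo --> (0 : R)) ->
      (fun m => nrm (yy m)) @ \oo --> (0 : R)].

Definition C_of (Xa : set seqR) : set seqR := [set x | Xa (cesaro (absq x))].

End Defs.

From Pilot Require Import Defs.
From HB Require Import structures.
From mathcomp Require Import all_boot all_order all_algebra.
From mathcomp Require Import all_classical all_reals all_analysis.
From mathcomp Require Import lra.
Set Implicit Arguments. Unset Strict Implicit. Unset Printing Implicit Defensive.
Import Order.TTheory GRing.Theory Num.Theory.
Import numFieldNormedType.Exports.
Local Open Scope classical_set_scope.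
Local Open Scope ring_scope.

(* Let h = (1/(k+1))_k = C e_0, which lies in X, and let t_N be |x| with its
   first N coordinates set to 0.  If x is order continuous in CX, then
   ||C t_N|| -> 0.  A sequence 0 <= z <= C|x| is dominated by
   M (z_0 + ... + z_{M-1}) h on [0, M) and by (|x_0| + ... + |x_{N-1}|) h + C t_N
   on [M, oo); moreover C h >= (1 + ... + 1/M) h on [M, oo), so the tail of h
   beyond M has norm at most ||C h|| / (1 + ... + 1/M) -> 0.  Choosing N, then
   M, and letting z decrease to 0 shows C|x| in X_a.  The converse inclusion
   only uses that C is positive and commutes with coordinatewise limits. *)

Section Cesaro.
Context {R : realType}.
Implicit Types (x y z : nat -> R) (u : nat -> nat -> R).

Definition tail N x : nat -> R := fun k => if (N <= k)%N then x k else 0.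

Lemma absq_tail N x : absq (tail N (absq x)) = tail N (absq x).
Proof. by apply/funext => k; rewrite /absq /tail; case: ifP; rewrite ?normr_id ?normr0. Qed.

Lemma tail_ge0 N x k : (forall j, 0 <= x j) -> 0 <= tail N x k.
Proof. by move=> x_ge0; rewrite /tail; case: ifP. Qed.

(* [cesaro] alone would denote Cesaro's lemma from mathcomp-analysis. *)
Lemma cesaroE x k : Defs.cesaro x k = harmonic k * \sum_(j < k.+1) x j.
Proof. by []. Qed.

Lemma cesaro_ge0 x k : (forall j, 0 <= x j) -> 0 <= Defs.cesaro x k.
Proof. by move=> x_ge0; rewrite cesaroE mulr_ge0 ?harmonic_ge0 ?sumr_ge0. Qed.

Lemma ler_cesaro x y k : (forall j, x j <= y j) -> Defs.cesaro x k <= Defs.cesaro y k.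
Proof. by move=> le_xy; rewrite !cesaroE ler_wpM2l ?harmonic_ge0 ?ler_sum. Qed.

Lemma cvg_cesaro u x k : (forall j, u ^~ j @ \oo --> x j) ->
  (fun m => Defs.cesaro (u m) k) @ \oo --> Defs.cesaro x k.
Proof.
move=> cvg_u; apply: cvgM; first exact: cvg_cst.
by apply: cvg_big => [|j _]; [exact: add_continuous | exact: cvg_u].
Qed.

Lemma cesaro_indicator0 k : Defs.cesaro (fun j => (j == 0)%:R : R) k = harmonic k.
Proof. by rewrite cesaroE big_ord_recl big1 ?addr0 ?mulr1. Qed.

Lemma cesaro_le_head_tail x N k :
  Defs.cesaro (absq x) k <=
  (\sum_(j < N) `|x j|) * harmonic k + Defs.cesaro (tail N (absq x)) k.
Proof.
pose head j : R := if (j < N)%N then `|x j| else 0.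
have head_ge0 j : 0 <= head j by rewrite /head; case: ifP.
have split_x j : absq x j = head j + tail N (absq x) j.
  by rewrite /head /tail; case: leqP; rewrite ?addr0 ?add0r.
rewrite !cesaroE [_ * harmonic k]mulrC -mulrDr ler_wpM2l ?harmonic_ge0 //.
under eq_bigr do rewrite split_x; rewrite big_split lerD2r /=.
rewrite (big_ord_widen (k.+1 + N) head (leq_addr _ _)).
rewrite (big_ord_widen (k.+1 + N) (fun j => `|x j|) (leq_addl _ _)).
rewrite [X in X <= _]big_mkcond [X in _ <= X]big_mkcond /=.
apply: ler_sum => i _; rewrite /head; case: ifP => _; case: ifP => //.
Qed.

Lemma le_sum_mul_harmonic z M k : (forall j, 0 <= z j) -> (k < M)%N ->
  z k <= M%:R * (\sum_(j < M) z j) * harmonic k.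
Proof.
move=> z_ge0 ltkM.
have le_zk_sum : z k <= \sum_(j < M) z j.
  by rewrite (bigD1 (Ordinal ltkM)) //= lerDl sumr_ge0.
rewrite mulrAC (le_trans le_zk_sum) // ler_peMl ?sumr_ge0 //=.
by rewrite ler_pdivlMr ?ltr0n // mul1r ler_nat.
Qed.

Lemma series_harmonic_gt0 M : (0 < M)%N -> 0 < series (@harmonic R) M.
Proof.
case: M => // M _; rewrite seriesEord /= big_ord_recl /=.
by rewrite ltr_pwDl ?sumr_ge0 // => i _; exact: harmonic_ge0.
Qed.

Lemma series_harmonic_le_cesaro M k : (M <= k)%N ->
  series harmonic M * harmonic k <= Defs.cesaro (@harmonic R) k.
Proof.
move=> leMk; rewrite cesaroE mulrC ler_wpM2l ?harmonic_ge0 // seriesEord /=.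
rewrite (big_ord_widen k.+1 (@harmonic R) (leqW leMk)) big_mkcond /=.
by apply: ler_sum => i _; case: ifP.
Qed.

Lemma cvg_series_harmonic : series (@harmonic R) @ \oo --> +oo.
Proof.
apply: nondecreasing_dvgn_lt; last exact: dvg_harmonic.
by apply: nondecreasing_series => n _ _; exact: harmonic_ge0.
Qed.

Lemma order_cont_tail_cvg0 (Y : set (nat -> R)) (nrmY : (nat -> R) -> R) y :
  order_cont Y nrmY y -> (fun N => nrmY (tail N (absq y))) @ \oo --> 0.
Proof.
move=> [_ y_oc]; apply: y_oc => [m k|m k|k]; rewrite /tail /absq.
- by case: ifP.
- by case: ifP => [/ltnW -> // | _]; case: ifP.
- apply: cvg_near_cst; near=> m; rewrite leqNgt ifN ?negbK //.
  by near: m; exact: nbhs_infty_gt.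
Unshelve. all: by end_near. Qed.

End Cesaro.

Section OrderContinuity.
Variable R : realType.
Variables (X : set (nat -> R)) (nrm : (nat -> R) -> R).
Implicit Types (x y z : nat -> R).

Lemma C_of_order_cont_sub : C_of (order_cont X nrm) `<=` order_cont (CX X) (CX_norm nrm).
Proof.
move=> x [Xx x_oc]; split=> // yy yy_bd yy_dec yy_cvg.
have abs_yy m j : absq (yy m) j = yy m j by rewrite /absq ger0_norm; case: (yy_bd m j).
apply: x_oc => [m k|m k|k].
- split; first by apply: cesaro_ge0 => j; exact: normr_ge0.
  rewrite ger0_norm; last by apply: cesaro_ge0 => j; exact: normr_ge0.
  by apply: ler_cesaro => j; rewrite abs_yy; case: (yy_bd m j).
- by apply: ler_cesaro => j; rewrite !abs_yy; exact: yy_dec.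
- have -> : 0 = Defs.cesaro (fun=> 0) k :> R by rewrite cesaroE big1 ?mulr0.
  apply: cvg_cesaro => j; under eq_fun do rewrite abs_yy; exact: yy_cvg.
Qed.

Hypothesis X_ideal : banach_ideal_space X nrm.

Lemma memXD x y : X x -> X y -> X (fun n => x n + y n).
Proof. by case: X_ideal => -[_ [+ _]] _; apply. Qed.

Lemma memXZ a x : X x -> X (fun n => a * x n).
Proof. by case: X_ideal => -[_ [_ [+ _]]] _; apply. Qed.

Lemma nrm_ge0 x : X x -> 0 <= nrm x.
Proof. by case: X_ideal => -[_ [_ [_ [+ _]]]] _ => /[apply] -[]. Qed.

Lemma nrmZ a x : X x -> nrm (fun n => a * x n) = `|a| * nrm x.
Proof. by case: X_ideal => -[_ [_ [_ [_ [+ _]]]]] _; apply. Qed.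

Lemma nrmD x y : X x -> X y -> nrm (fun n => x n + y n) <= nrm x + nrm y.
Proof. by case: X_ideal => -[_ [_ [_ [_ [_ [+ _]]]]]] _; apply. Qed.

Lemma memX_le x y : (forall n, `|x n| <= `|y n|) -> X y -> X x.
Proof. by case: X_ideal => _ X_id le_xy /(X_id _ _ le_xy) []. Qed.

Lemma nrm_le x y : (forall n, `|x n| <= `|y n|) -> X y -> nrm x <= nrm y.
Proof. by case: X_ideal => _ X_id le_xy /(X_id _ _ le_xy) []. Qed.

Lemma memX_tail N x : X x -> X (tail N x).
Proof. by apply: memX_le => n; rewrite /tail; case: ifP; rewrite ?normr0. Qed.

Hypothesis X_cesaro : forall x, X x -> X (Defs.cesaro x).
Hypothesis X_nonvanishing : exists2 w, X w & forall n, w n != 0.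

Lemma memX_harmonic : X harmonic.
Proof.
have [w Xw w_neq0] := X_nonvanishing.
have X_delta0 : X (fun j => (j == 0)%:R).
  apply: (memX_le _ (memXZ (w 0)^-1 Xw)) => n.
  by case: eqP => [->|_]; rewrite ?mulVf ?normr0 ?normr1.
apply: (memX_le _ (X_cesaro X_delta0)) => n.
by rewrite cesaro_indicator0.
Qed.

Lemma nrm_tail_harmonic_cvg0 : (fun M => nrm (tail M harmonic)) @ \oo --> 0.
Proof.
have XCh := X_cesaro memX_harmonic.
have bound M : (0 < M)%N ->
    nrm (tail M harmonic) <= (series harmonic M)^-1 * nrm (Defs.cesaro harmonic).
  move=> M_gt0; have sM_gt0 : 0 < series harmonic M :> R := series_harmonic_gt0 M_gt0.
  rewrite -[X in X * _]gtr0_norm ?invr_gt0 // -nrmZ //.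
  apply: nrm_le (memXZ _ XCh) => k.
  have Ch_ge0 : 0 <= Defs.cesaro (@harmonic R) k.
    by apply: cesaro_ge0 => j; exact: harmonic_ge0.
  rewrite /tail; case: leqP => [leMk|_]; last by rewrite normr0 normr_ge0.
  rewrite ger0_norm ?harmonic_ge0 // ger0_norm; last first.
    by rewrite mulr_ge0 ?invr_ge0 ?(ltW sM_gt0).
  by rewrite ler_pdivlMl // series_harmonic_le_cesaro.
have upper_cvg0 :
    (fun M => (series harmonic M)^-1 * nrm (Defs.cesaro harmonic)) @ \oo --> 0.
  rewrite -[0](mul0r (nrm (Defs.cesaro harmonic))); apply: cvgM; last exact: cvg_cst.
  apply/gtr0_cvgV0; last exact: cvg_series_harmonic.
  near=> n; apply: series_harmonic_gt0; near: n; exact: nbhs_infty_gt.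
apply: (@squeeze_cvgr _ _ _ _ (cst 0) _ (fun M => nrm (tail M harmonic)) _ _ _ upper_cvg0).
  near=> M; rewrite nrm_ge0 ?bound //; last exact: memX_tail memX_harmonic.
  by near: M; exact: nbhs_infty_gt.
exact: cvg_cst.
Unshelve. all: by end_near. Qed.

Lemma nrm_le_head_tail x z N M :
  X (Defs.cesaro (absq x)) -> (forall k, 0 <= z k <= Defs.cesaro (absq x) k) ->
  (N <= M)%N ->
  nrm z <= M%:R * (\sum_(j < M) z j) * nrm harmonic
           + (\sum_(j < N) `|x j|) * nrm (tail M harmonic)
           + nrm (Defs.cesaro (tail N (absq x))).
Proof.
move=> XCx z_bd leNM.
set s := \sum_(j < M) z j; set c := \sum_(j < N) `|x j|.
set T := Defs.cesaro (tail N (absq x)).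
have z_ge0 k : 0 <= z k by case/andP: (z_bd k).
have T_ge0 k : 0 <= T k by apply: cesaro_ge0 => j; apply: tail_ge0 => i; exact: normr_ge0.
have hM_ge0 k : 0 <= tail M (@harmonic R) k by apply: tail_ge0 => j; exact: harmonic_ge0.
have c_ge0 : 0 <= c by apply: sumr_ge0 => j _; exact: normr_ge0.
have s_ge0 : 0 <= s by apply: sumr_ge0 => j _; exact: z_ge0.
have XT : X T.
  apply: memX_le XCx => k; rewrite !ger0_norm ?T_ge0 //; last first.
    by apply: cesaro_ge0 => j; exact: normr_ge0.
  by apply: ler_cesaro => j; rewrite /tail /absq; case: ifP.
have X_head : X (fun k => M%:R * s * harmonic k) := memXZ _ memX_harmonic.
have X_rest : X (fun k => c * tail M harmonic k + T k).
  exact: memXD (memXZ _ (memX_tail _ memX_harmonic)) XT.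
have rest_ge0 k : 0 <= c * tail M harmonic k + T k.
  exact: addr_ge0 (mulr_ge0 c_ge0 (hM_ge0 k)) (T_ge0 k).
have le_z k : z k <= M%:R * s * harmonic k + (c * tail M harmonic k + T k).
  case: (ltnP k M) => [ltkM|leMk].
    by rewrite ler_wpDr // le_sum_mul_harmonic.
  rewrite ler_wpDl ?mulr_ge0 ?harmonic_ge0 // /tail leMk.
  apply: le_trans (cesaro_le_head_tail x N k).
  by case/andP: (z_bd k).
apply: (le_trans (nrm_le _ (memXD X_head X_rest))).
  move=> k; rewrite (ger0_norm (z_ge0 k)) ger0_norm ?le_z //.
  by rewrite addr_ge0 ?rest_ge0 // !mulr_ge0 ?harmonic_ge0.
apply: (le_trans (nrmD X_head X_rest)); rewrite -addrA lerD //.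
  by rewrite nrmZ ?ger0_norm ?mulr_ge0 //; exact: memX_harmonic.
apply: (le_trans (nrmD (memXZ _ (memX_tail _ memX_harmonic)) XT)).
by rewrite nrmZ ?ger0_norm //; exact: memX_tail memX_harmonic.
Qed.

Lemma order_cont_CX_sub : order_cont (CX X) (CX_norm nrm) `<=` C_of (order_cont X nrm).
Proof.
move=> x x_oc; have [XCx _] := x_oc; split=> // zz zz_bd _ zz_cvg.
have tail_cvg0 : (fun N => nrm (Defs.cesaro (tail N (absq x)))) @ \oo --> 0.
  by have := order_cont_tail_cvg0 x_oc; rewrite /CX_norm; under eq_fun do rewrite absq_tail.
apply/cvgr0Pnorm_lt => e e_gt0.
have e3_gt0 : 0 < e / 3 by rewrite divr_gt0.
have [N TN_lt] := filter_ex (cvgr_lt 0 tail_cvg0 _ e3_gt0).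
pose c := \sum_(j < N) `|x j|.
have cM_cvg0 : (fun M => c * nrm (tail M harmonic)) @ \oo --> 0.
  by rewrite -(mulr0 c); apply: cvgM; [exact: cvg_cst | exact: nrm_tail_harmonic_cvg0].
have [M [leNM cM_lt]] :=
  filter_ex (filterI (nbhs_infty_ge N) (cvgr_lt 0 cM_cvg0 _ e3_gt0)).
have sum_cvg0 : \sum_(j < M) zz m j @[m --> \oo] --> \sum_(j < M) (0 : R).
  by apply: cvg_big => [|j _]; [exact: add_continuous | exact: zz_cvg].
have head_cvg0 : (fun m => M%:R * (\sum_(j < M) zz m j) * nrm harmonic) @ \oo
                 --> M%:R * (\sum_(j < M) (0 : R)) * nrm harmonic.
  by apply: cvgM; [apply: cvgM; [exact: cvg_cst | exact: sum_cvg0] | exact: cvg_cst].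
rewrite big1 // mulr0 mul0r in head_cvg0.
have zz_le_cesaro m k : 0 <= zz m k <= Defs.cesaro (absq x) k.
  have [zz_ge0 zz_le] := zz_bd m k.
  by rewrite zz_ge0 -[L in _ <= L]ger0_norm //; apply: cesaro_ge0 => j; exact: normr_ge0.
have Xzz m : X (zz m).
  apply: memX_le XCx => k; have [zz_ge0 zz_le] := zz_bd m k.
  by rewrite ger0_norm.
near=> m.
have head_lt : M%:R * (\sum_(j < M) zz m j) * nrm harmonic < e / 3.
  by near: m; exact: (cvgr_lt 0 head_cvg0 _ e3_gt0).
rewrite ger0_norm; last exact: nrm_ge0 (Xzz m).
apply: le_lt_trans (nrm_le_head_tail XCx (zz_le_cesaro m) leNM) _.
rewrite -/c; lra.
Unshelve. all: by end_near. Qed.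

End OrderContinuity.

Theorem proposition5p1 (R : realType) (X : set (nat -> R)) (nrm : (nat -> R) -> R) :
  ri_space X nrm -> cesaro_bounded X nrm ->
  order_cont (CX X) (CX_norm nrm) = C_of (order_cont X nrm).
Proof.
move=> [X_ideal X_nonvanishing _] [X_cesaro _].
apply/seteqP; split.
- exact: (order_cont_CX_sub X_ideal X_cesaro X_nonvanishing).
- exact: C_of_order_cont_sub.
Qed.
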